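(* Let $m>1$, $D>0$, $r>0$, let $b,d$ be as in the standing assumptions below with $b'(\kappa)<0$, and let $c_\kappa$ and $c^*$ be as defined below. Then $c^*(m,r,b'(\kappa),d'(\kappa))\ge c_\kappa(m,r,b'(\kappa),d'(\kappa))$. If $b'(\kappa)\ge-d'(\kappa)$, then $c^*(m,r,b'(\kappa),d'(\kappa))=+\infty$ for large time delay $r$; while if $b'(\kappa)<-d'(\kappa)$, then $$c^*(m,r,b'(\kappa),d'(\kappa))=\frac{\mu^*(m,b'(\kappa),d'(\kappa))+o(1)}{r},\qquad r\to+\infty,$$ where $\mu^*(m,b'(\kappa),d'(\kappa)):=\pi\sqrt{\frac{Dm\kappa^{m-1}}{-b'(\kappa)-d'(\kappa)}}$.
   Context: Standing assumptions: $d\in C^2([0,+\infty))$ with $d(0)=0$, $d'(s)>0$, $d''(s)\ge0$ for $s>0$; $b\in C^1([0,+\infty);[0,+\infty))$ has exactly one positive local extremum point $s_M$ (its global maximum point), $b(0)=0$, there is $\kappa>0$ with $b(\kappa)=d(\kappa)$, $b'(0)>d'(0)$, $b'(\kappa)<d'(\kappa)$, $d(s)<b(s)\le b'(0)s$ for $s\in(0,\kappa)$, and $s_M<\kappa$. For $c>0$ let $\chi_\kappa(\lambda):=Dm\kappa^{m-1}\lambda^2+b'(\kappa)e^{-\lambda cr}-c\lambda-d'(\kappa)$; $c_\kappa\in(0,+\infty]$ is the extended real number such that $\chi_\kappa$ has three real roots $\lambda_1\le\lambda_2<0<\lambda_3$ if and only if $c\le c_\kappa$ (and no negative real root for $c>c_\kappa$).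 With $\sigma=c^{-2}$, let $\chi^*(\lambda):=D\sigma m\kappa^{m-1}\lambda^2-\lambda-d'(\kappa)+b'(\kappa)e^{-\lambda r}$, $\lambda\in\mathbb C$. Then $c^*=c^*(m,r,b'(\kappa),d'(\kappa))\in(0,+\infty]$ is the largest extended real number such that (for speeds $c$ below it) $\chi^*$ has no roots in the half-plane $\{\Re z>0\}$ other than a positive real root. *)

From HB Require Import structures.
From mathcomp Require Import all_boot all_order all_algebra.
From mathcomp Require Import all_classical all_reals all_analysis.
Set Implicit Arguments. Unset Strict Implicit. Unset Printing Implicit Defensive.
Import Order.TTheory GRing.Theory Num.Theory.
Import numFieldNormedType.Exports.
Local Open Scope classical_set_scope.
Local Open Scope ring_scope.

Section Defs.
Variable R : realType.

(* A stands for D*m*kappa^(m-1), beta for b'(kappa), delta for d'(kappa). *)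

Definition chi_kappa (A beta delta r c lam : R) : R :=
  A * lam ^+ 2 + beta * expR (- (lam * c * r)) - c * lam - delta.

Definition dchi_kappa (A beta delta r c lam : R) : R :=
  2 * A * lam - beta * c * r * expR (- (lam * c * r)) - c.

(* chi_kappa has three real roots l1 <= l2 < 0 < l3 (counted with
   multiplicity: if l1 = l2 it is a double root). *)
Definition three_roots (A beta delta r c : R) : Prop :=
  exists l1 l2 l3 : R,
    [/\ l1 <= l2, l2 < 0 & 0 < l3] /\
    [/\ chi_kappa A beta delta r c l1 = 0,
        chi_kappa A beta delta r c l2 = 0 &
        chi_kappa A beta delta r c l3 = 0] /\
    (l1 = l2 -> dchi_kappa A beta delta r c l1 = 0).

Definition ckappa (A beta delta r : R) : \bar R :=
  ereal_sup [set c%:E | c in [set c : R | 0 < c /\ three_roots A beta delta r c]].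

(* chi^*(z) = A sigma z^2 - z - delta + beta e^{-z r}, sigma = c^{-2},
   evaluated at z = x + i y: real and imaginary parts. *)
Definition chistar_re (A beta delta r c x y : R) : R :=
  A * c ^- 2 * (x ^+ 2 - y ^+ 2) - x - delta + beta * expR (- (x * r)) * cos (y * r).
Definition chistar_im (A beta delta r c x y : R) : R :=
  A * c ^- 2 * (2 * x * y) - y - beta * expR (- (x * r)) * sin (y * r).

Definition good_speed (A beta delta r c : R) : Prop :=
  forall x y : R, 0 < x ->
    chistar_re A beta delta r c x y = 0 ->
    chistar_im A beta delta r c x y = 0 -> y = 0.

Definition cstar (A beta delta r : R) : \bar R :=
  ereal_sup [set cb : \bar R |
    forall c : R, 0 < c -> (c%:E < cb)%E -> good_speed A beta delta r c].

Definition mustar (A beta delta : R) : R :=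
  pi * Num.sqrt (A / (- beta - delta)).

Definition local_extremum (f : R -> R) (s : R) : Prop :=
  (\forall x \near s, f x <= f s) \/ (\forall x \near s, f s <= f x).

End Defs.

From mathcomp Require Import all_boot all_order all_algebra.
From mathcomp Require Import all_classical all_reals all_analysis.
From mathcomp Require Import ring lra.
Set Implicit Arguments. Unset Strict Implicit. Unset Printing Implicit Defensive.
Import Order.TTheory GRing.Theory Num.Theory.
Import numFieldNormedType.Exports.
Local Open Scope classical_set_scope.
Local Open Scope ring_scope.

(* Let z = x + i y be a root of chi^* with x, y > 0, put a = A / c^2 and
   E = e^{-x r}, and write beta, delta for b'(kappa), d'(kappa).  Eliminating
   between the real and imaginary parts gives
     2 a y^3 = - x y - 2 delta y + beta E (x sin (y r) + 2 y cos (y r)),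
   while - E (x sin (y r) + 2 y cos (y r)) <= 2 y.  Hence there is no such root
   when beta >= - delta, so that c^* = +oo, and a y^2 < - beta - delta otherwise.
   A negative root l of chi_kappa at speed c gives chi^*(l c) >= 0 at every
   slower speed; together with the root equations and a third-order Taylor
   bound for the exponential this rules out non-real roots: c_kappa <= c^*.
   For beta < - delta and r large, the root equations force y r > pi - eta,
   which contradicts a y^2 < - beta - delta once
   c r < (pi - eta) sqrt (A / (- beta - delta)).  Conversely, the intermediate
   value theorem applied to the phase y r on [pi, pi + eta] produces roots with
   a >= (1 - o(1)) (- beta - delta) r^2 / pi^2.  Therefore
   r c^* -> pi sqrt (A / (- beta - delta)). *)

Section ExpTrigBounds.
Context {R : realType}.
Implicit Types t u v w x y r eta : R.

Lemma expR_ge_taylor3 t : 0 <= t -> 1 + t + t ^+ 2 / 2 + t ^+ 3 / 6 <= expR t.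
Proof.
move=> t0; have : {homo series (exp_coeff t) : n m / (n <= m)%N >-> n <= m}.
  by apply: nondecreasing_series => n _; rewrite divr_ge0 // exprn_ge0.
move=> /nondecreasing_cvgn_le /(_ (is_cvg_series_exp_coeff t) 4%N).
congr (_ <= _); rewrite /series /= !big_nat_recr //= big_geq // /exp_coeff /=.
by rewrite !factS fact0 expr0 expr1 !natrM; field.
Qed.

Lemma expR_ge_sqrD t : 0 <= t -> t ^+ 2 + t <= expR t.
Proof.
move=> t0; have := expR_ge_taylor3 t0.
have : 0 <= (t - 2) ^+ 2 * (t + 1) by rewrite mulr_ge0 ?sqr_ge0 //; lra.
have -> : t ^+ 3 = t ^+ 2 * t by rewrite exprS mulrC.
nra.
Qed.

Lemma expRN_mul1D_le1 w : expR (- w) * (1 + w) <= 1.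
Proof. by rewrite expRN ler_pdivrMl ?expR_gt0 // mulr1 expR_ge1Dx. Qed.

Lemma pihalf_lt_of_cos_lt0 v : 0 < v -> cos v < 0 -> pi / 2 < v.
Proof.
move=> v0 cv; rewrite ltNge; apply/negP => hv.
have : 0 <= cos v by apply: cos_ge0_pihalf; have := @pi_gt0 R; lra.
lra.
Qed.

Lemma pi_le_of_sin_le0 v : 0 < v -> sin v <= 0 -> pi <= v.
Proof.
move=> v0 sv; rewrite leNgt; apply/negP => hv.
have : 0 < sin v by apply: sin_gt0_pi; rewrite v0 hv.
lra.
Qed.

Lemma sin_le_of_le_piB eta v : 0 <= eta -> pi / 2 <= v -> v <= pi - eta ->
  sin eta <= sin v.
Proof.
move=> eta0 v1 v2; have -> : sin v = sin (pi - v) by rewrite sinB sinpi cospi; ring.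
have pi0 := @pi_gt0 R.
have I_eta : eta \in `[- (pi / 2), pi / 2] by rewrite in_itv /=; apply/andP; split; lra.
have I_v : pi - v \in `[- (pi / 2), pi / 2] by rewrite in_itv /=; apply/andP; split; lra.
case: (ltrgtP eta (pi - v)) => [|?|->] //; last lra.
by rewrite -(ltr_sin I_eta I_v) => /ltW.
Qed.

Lemma sin_le0_piD eta v : eta <= pi -> pi <= v <= pi + eta -> sin v <= 0.
Proof.
move=> eta_pi /andP[v1 v2].
have -> : sin v = - sin (v - pi) by rewrite sinB sinpi cospi; ring.
by rewrite oppr_le0 sin_ge0_pi //; apply/andP; split; lra.
Qed.

Lemma cos_le_cosN_piD eta v : 0 <= eta <= pi -> pi <= v <= pi + eta ->
  cos eta <= - cos v.
Proof.
move=> /andP[eta0 eta_pi] /andP[v1 v2].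
have -> : - cos v = cos (v - pi) by rewrite cosB sinpi cospi; ring.
have I_eta : eta \in `[0, pi] by rewrite in_itv /=; apply/andP; split; lra.
have I_v : v - pi \in `[0, pi] by rewrite in_itv /=; apply/andP; split; lra.
case: (ltrgtP (v - pi) eta) => [|?|->] //; last lra.
by rewrite -(ltr_cos I_v I_eta) => /ltW.
Qed.

Lemma expRN_sin_cos_le x y r : 0 < x -> 0 < y -> 0 < r ->
  - expR (- (x * r)) * (x * sin (y * r) + 2 * y * cos (y * r)) <= 2 * y.
Proof.
move=> x0 y0 r0; set E := expR _; set s := sin _; set C := cos _.
have E0 : 0 < E := expR_gt0 _.
have E1 : E * (1 + x * r) <= 1 := expRN_mul1D_le1 _.
have Exr : 0 <= E * (x * r) by rewrite mulr_ge0 ?ltW ?mulr_gt0.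
have sN1 : -1 <= s := sin_geN1 _; have CN1 : -1 <= C := cos_geN1 _.
have EyC : - (E * C) * y <= E * y by apply: ler_wpM2r; [exact: ltW | nra].
have Ey : E * y <= y by apply: ler_piMl; [exact: ltW | lra].
case: (ltP (y * r) 1) => yr1.
  have s0 : 0 < s.
    by apply: sin_gt0_pihalf; have := @pihalf_ge1 R; rewrite mulr_gt0 //=; lra.
  by have := mulr_gt0 E0 (mulr_gt0 x0 s0); lra.
have : E * - (x * s) <= E * (x * (y * r)).
  by rewrite ler_pM2l // -mulrN ler_pM2l //; lra.
have : y * (E * (x * r)) <= y * (1 - E) by rewrite ler_pM2l //; lra.
lra.
Qed.

Lemma trig_quadratic_le_expR u t v : 0 < u -> u <= t -> 0 < v ->
  0 < - (u * sin v + 2 * v * cos v) ->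
  - (u * sin v + 2 * v * cos v) * t ^+ 2 + v ^+ 2 * sin v * (2 * t - u)
    <= 2 * v ^+ 3 * expR t.
Proof.
move=> u0 ut v0 Phi0; have t0 : 0 <= t by lra.
have sN1 := sin_geN1 v; have s1 := sin_le1 v; have cN1 := cos_geN1 v.
have t2 : 0 <= t ^+ 2 := sqr_ge0 t; have vv : 0 < v ^+ 2 := exprn_gt0 2 v0.
have v3 : v ^+ 3 = v ^+ 2 * v by rewrite exprS mulrC.
case: (leP 0 (sin v)) => s0.
- have v1 : 1 <= v.
    have : cos v < 0 by nra.
    by move/(pihalf_lt_of_cos_lt0 v0); have := @pihalf_ge1 R; lra.
  have Phit : - (u * sin v + 2 * v * cos v) * t ^+ 2 <= 2 * v * t ^+ 2.
    by apply: ler_wpM2r => //; nra.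
  have st : v ^+ 2 * sin v * (2 * t - u) <= v ^+ 2 * (2 * t).
    by rewrite -mulrA ler_pM2l //; nra.
  have : 2 * v * t ^+ 2 + v ^+ 2 * (2 * t) <= 2 * v ^+ 3 * (t ^+ 2 + t).
    have h2 : v ^+ 2 <= v ^+ 2 * v by rewrite ler_peMr // ltW.
    have h1 : v <= v ^+ 2 * v by rewrite expr2 in h2 *; nra.
    rewrite v3; nra.
  have : 2 * v ^+ 3 * (t ^+ 2 + t) <= 2 * v ^+ 3 * expR t.
    by rewrite ler_pM2l ?expR_ge_sqrD // mulr_gt0 // exprn_gt0.
  lra.
- have v2 : 2 <= v.
    by have := pi_le_of_sin_le0 v0 (ltW s0); have := @pi_ge2 R; lra.
  have Phit : - (u * sin v + 2 * v * cos v) * t ^+ 2 <= (t + 2 * v) * t ^+ 2.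
    by apply: ler_wpM2r => //; nra.
  have st : v ^+ 2 * sin v * (2 * t - u) <= 0 by rewrite -mulrA pmulr_rle0 //; nra.
  have : (t + 2 * v) * t ^+ 2 <= 2 * v ^+ 3 * (t ^+ 2 / 2 + t ^+ 3 / 6).
    have t3 : t ^+ 3 = t ^+ 2 * t by rewrite exprS mulrC.
    have v24 : 4 <= v ^+ 2 by rewrite expr2; nra.
    have : 0 <= (v ^+ 2 * v - 3) * (t ^+ 2 * t) by rewrite mulr_ge0 ?mulr_ge0 //; nra.
    have : 0 <= (v ^+ 2 - 2) * v * t ^+ 2 by rewrite mulr_ge0 ?mulr_ge0 //; lra.
    rewrite v3 t3; nra.
  have : 2 * v ^+ 3 * (t ^+ 2 / 2 + t ^+ 3 / 6) <= 2 * v ^+ 3 * expR t.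
    rewrite ler_pM2l ?mulr_gt0 ?exprn_gt0 //.
    by have := expR_ge_taylor3 t0; lra.
  lra.
Qed.

End ExpTrigBounds.

Section ChiStarRoots.
Context {R : realType}.
Implicit Types a be de r x y : R.

Definition chi_re a be de r x y :=
  a * (x ^+ 2 - y ^+ 2) - x - de + be * expR (- (x * r)) * cos (y * r).
Definition chi_im a be de r x y :=
  a * (2 * x * y) - y - be * expR (- (x * r)) * sin (y * r).

Definition root_free a be de r := forall x y, 0 < x -> 0 < y ->
  chi_re a be de r x y = 0 -> chi_im a be de r x y = 0 -> False.

Lemma good_speed_root_free A be de r c :
  root_free (A / c ^+ 2) be de r -> good_speed A be de r c.
Proof.
move=> rf x y x0 hre him; case: (ltrgtP y 0) => // y0; exfalso.
- apply: (rf x (- y)); rewrite ?oppr_gt0 //.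
  + by move: hre; rewrite /chistar_re /chi_re sqrrN mulNr cosN.
  + move: him; rewrite /chistar_im /chi_im mulNr sinN => him.
    by rewrite -[RHS]oppr0 -him; ring.
- exact: (rf x y).
Qed.

Lemma root_not_good_speed A be de r c x y : 0 < x -> 0 < y ->
  chi_re (A / c ^+ 2) be de r x y = 0 -> chi_im (A / c ^+ 2) be de r x y = 0 ->
  ~ good_speed A be de r c.
Proof. by move=> x0 y0 hre him /(_ x y x0 hre him) y_eq0; rewrite y_eq0 ltxx in y0. Qed.

Section RootIdentities.
Variables a be de r x y : R.
Hypotheses (hre : chi_re a be de r x y = 0) (him : chi_im a be de r x y = 0).

Lemma chi_root_im : (2 * a * x - 1) * y = be * expR (- (x * r)) * sin (y * r).
Proof. by apply/eqP; rewrite -subr_eq0 -him; apply/eqP; rewrite /chi_im; ring. Qed.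

Lemma chi_root_cubic : 2 * a * y ^+ 3 = - x * y - 2 * de * y
  + be * expR (- (x * r)) * (x * sin (y * r) + 2 * y * cos (y * r)).
Proof.
apply/eqP; rewrite -subr_eq0; apply/eqP.
transitivity (x * chi_im a be de r x y - 2 * y * chi_re a be de r x y).
  by rewrite /chi_re /chi_im; ring.
by rewrite hre him; ring.
Qed.

End RootIdentities.
End ChiStarRoots.

Section RootFree.
Context {R : realType}.
Implicit Types a be de r p x y eta : R.

Lemma root_free_of_le_feedback a be de r : 0 < a -> 0 < r -> be < 0 -> - de <= be ->
  root_free a be de r.
Proof.
move=> a0 r0 be0 hbe x y x0 y0 hre him.
have nbe : 0 <= - be by lra.
have := ler_wpM2l nbe (expRN_sin_cos_le x0 y0 r0); have := chi_root_cubic hre him.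
have : 0 < 2 * a * y ^+ 3 + x * y by rewrite addr_gt0 ?mulr_gt0 // exprn_gt0.
have : - be * (2 * y) <= de * (2 * y) by apply: ler_wpM2r; lra.
lra.
Qed.

Lemma root_free_of_chi_neg_ge0 a be de r p :
  0 < a -> 0 < r -> be < 0 -> 0 < de -> 0 < p ->
  0 <= a * p ^+ 2 + p - de + be * expR (p * r) -> root_free a be de r.
Proof.
move=> a0 r0 be0 de0 p0 hp x y x0 y0 hre him.
have := chi_root_im him; have := chi_root_cubic hre him.
move: hp; set E := expR (- (x * r)); set s := sin _; set C := cos _.
set P := expR (p * r); set T := p + x; set Phi := - (x * s + 2 * y * C).
move=> hp cubic im.
have E0 : 0 < E := expR_gt0 _.
have PE : P = E * expR (T * r) by rewrite -expRD; congr expR; rewrite /T; ring.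
have xy : 0 < x * y := mulr_gt0 x0 y0.
have dey : 0 < de * y := mulr_gt0 de0 y0.
have bE : 0 < - be * E by rewrite mulr_gt0 // oppr_gt0.
have ay3 : 2 * a * y ^+ 3 < - be * E * Phi by rewrite /Phi; lra.
have Phi0 : 0 < Phi.
  rewrite -(pmulr_rgt0 _ bE); apply: lt_trans ay3.
  by rewrite !mulr_gt0 // exprn_gt0.
have K : Phi * T ^+ 2 + y ^+ 2 * s * (2 * T - x) <= 2 * y ^+ 3 * expR (T * r).
  have xrT : x * r <= T * r by rewrite ler_pM2r // /T; lra.
  have Phir : 0 < - (x * r * s + 2 * (y * r) * C).
    suff -> : - (x * r * s + 2 * (y * r) * C) = r * Phi by rewrite mulr_gt0.
    by rewrite /Phi; ring.
  have := trig_quadratic_le_expR (mulr_gt0 x0 r0) xrT (mulr_gt0 y0 r0) Phir.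
  rewrite -/s -/C => h; rewrite -(ler_pM2l (exprn_gt0 3 r0)) /Phi; lra.
(* [2 y chi^*(- p)] plus multiples of the root identities [cubic] and [im]. *)
have Q : 0 <= 2 * a * y * (T ^+ 2 + y ^+ 2) + 2 * be * (y * P - E * (T * s + y * C)).
  have -> : 2 * a * y * (T ^+ 2 + y ^+ 2) + 2 * be * (y * P - E * (T * s + y * C))
    = 2 * y * (a * p ^+ 2 + p - de + be * P)
      + (2 * a * y ^+ 3 - (- x * y - 2 * de * y + be * E * (x * s + 2 * y * C)))
      + (2 * p + x) * ((2 * a * x - 1) * y - be * E * s) by rewrite /T; ring.
  by rewrite cubic im !subrr mulr0 !addr0 mulr_ge0 // mulr_ge0 // ltW.
have TyP : 0 < T ^+ 2 + y ^+ 2 by rewrite ltr_pwDr ?exprn_gt0 // sqr_ge0.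
have h1 : 2 * a * y ^+ 3 * (T ^+ 2 + y ^+ 2) < - be * E * Phi * (T ^+ 2 + y ^+ 2).
  by rewrite ltr_pM2r.
have h2 : - be * E * (Phi * T ^+ 2 + y ^+ 2 * s * (2 * T - x))
    <= - be * E * (2 * y ^+ 3 * expR (T * r)) by rewrite ler_pM2l.
have h3 := mulr_ge0 (sqr_ge0 y) Q.
rewrite PE /Phi in h1 h2 h3; lra.
Qed.

Lemma root_sqr_lt a be de r x y : 0 < r -> 0 < x -> 0 < y -> be < 0 ->
  chi_re a be de r x y = 0 -> chi_im a be de r x y = 0 -> a * y ^+ 2 < - be - de.
Proof.
move=> r0 x0 y0 be0 hre him.
have nbe : 0 <= - be by lra.
have := ler_wpM2l nbe (expRN_sin_cos_le x0 y0 r0); have := chi_root_cubic hre him.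
rewrite -(ltr_pM2l (_ : 0 < 2 * y)) ?mulr_gt0 //.
have := mulr_gt0 x0 y0; rewrite !expr2; lra.
Qed.

Lemma root_phase_gt a be de r x y eta : 0 < r -> 0 < x -> 0 < y -> be < 0 -> 0 < de ->
  0 < eta -> r <= 2 * a -> pi * expR 1 <= - be * sin eta * r ->
  chi_re a be de r x y = 0 -> chi_im a be de r x y = 0 -> pi - eta < y * r.
Proof.
move=> r0 x0 y0 be0 de0 eta0 ra hr hre him; rewrite ltNge; apply/negP => yr.
have := chi_root_im him; have := chi_root_cubic hre him.
set E := expR _; set s := sin _; set C := cos _ => cubic im.
have E0 : 0 < E := expR_gt0 _.
have pi0 := @pi_gt0 R; have v0 : 0 < y * r := mulr_gt0 y0 r0.
have s0 : 0 < s by apply: sin_gt0_pi; rewrite v0 /=; lra.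
have a0 : 0 < a by lra.
have C0 : C < 0.
  rewrite ltNge; apply/negP => C0.
  have : 0 < 2 * a * y ^+ 3 + x * y + 2 * de * y.
    by rewrite !addr_gt0 ?mulr_gt0 // exprn_gt0.
  have : 0 <= E * (x * s + 2 * y * C) by apply: mulr_ge0; [exact: ltW | nra].
  nra.
have ax : 2 * a * x < 1.
  have : be * E * s < 0 by rewrite -mulrA nmulr_rlt0 ?mulr_gt0.
  rewrite -im pmulr_llt0 //; lra.
have Ee : expR (-1) <= E.
  rewrite ler_expR lerNl opprK; have : r * x <= 2 * a * x by rewrite ler_pM2r.
  by rewrite mulrC; lra.
have bs : - be * s * expR (-1) < y.
  have : - be * s * expR (-1) <= - be * s * E by rewrite ler_pM2l ?mulr_gt0 //; lra.
  have : 0 < 2 * a * x * y by rewrite !mulr_gt0.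
  lra.
have : - be * sin eta * r <= - be * s * r.
  rewrite ler_pM2r // ler_pM2l; last lra.
  by apply: sin_le_of_le_piB; [exact: ltW | exact: ltW (pihalf_lt_of_cos_lt0 v0 C0)|].
have : - be * s * r < pi * expR 1.
  have e0 : 0 < r * expR 1 by rewrite mulr_gt0 ?expR_gt0.
  have := bs; rewrite -(ltr_pM2r e0).
  have -> : - be * s * expR (-1) * (r * expR 1) = - be * s * r * (expR (-1) * expR 1).
    by ring.
  rewrite -expRD addNr expR0 mulr1.
  have : y * r * expR 1 <= pi * expR 1 by rewrite ler_pM2r ?expR_gt0 //; lra.
  lra.
lra.
Qed.

Lemma root_free_long_delay a be de r eta : 0 < r -> be < - de -> 0 < de ->
  0 < eta < pi -> (- be - de) / (pi - eta) ^+ 2 * r ^+ 2 <= a -> r <= 2 * a ->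
  pi * expR 1 <= - be * sin eta * r -> root_free a be de r.
Proof.
move=> r0 hbe de0 /andP[eta0 etapi] ha ra hr x y x0 y0 hre him.
have be0 : be < 0 by lra.
have := root_sqr_lt r0 x0 y0 be0 hre him.
have := root_phase_gt r0 x0 y0 be0 de0 eta0 ra hr hre him.
set k := (- be - de) / (pi - eta) ^+ 2 => phase.
have k0 : 0 < k by rewrite divr_gt0 ?exprn_gt0; lra.
have kE : k * (pi - eta) ^+ 2 = - be - de by rewrite divfK ?expf_neq0 ?subr_eq0 ?gt_eqF.
have : k * (pi - eta) ^+ 2 < k * (y * r) ^+ 2.
  by rewrite ltr_pM2l // !expr2 ltr_pM //; lra.
rewrite kE.
have : k * r ^+ 2 * y ^+ 2 <= a * y ^+ 2 by rewrite ler_pM2r ?exprn_gt0.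
rewrite exprMn; lra.
Qed.

End RootFree.

Section RootExistence.
Context {R : realType}.
Implicit Types a b be de k r u eta v E : R.

(* With [b = - be] and [E = expR (- u)], this is [- 2 u v] times
   [chi_re a be de r (u / r) (v / r)] after eliminating [a] through
   [chi_im a be de r (u / r) (v / r) = 0]. *)
Definition phase_gap b de r u E v := (v ^+ 2 + u ^+ 2) * v / r + 2 * u * de * v
  - b * E * ((v ^+ 2 - u ^+ 2) * sin v - 2 * u * v * cos v).

Lemma continuous_phase_gap b de r u E : continuous (phase_gap b de r u E).
Proof.
move=> v; apply: cvgB; first apply: cvgD.
- apply: cvgM; last exact: cvg_cst.
  apply: cvgM; last exact: cvg_id.
  by apply: cvgD; [exact: exprn_continuous | exact: cvg_cst].
- by apply: cvgM; [exact: cvg_cst | exact: cvg_id].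
- apply: cvgM; first exact: cvg_cst.
  apply: cvgB; apply: cvgM.
  + by apply: cvgB; [exact: exprn_continuous | exact: cvg_cst].
  + exact: continuous_sin.
  + by apply: cvgM; [exact: cvg_cst | exact: cvg_id].
  + exact: continuous_cos.
Qed.

Lemma exists_phase b de r u eta E : 0 < b -> 0 <= de -> 0 < r -> 0 < E ->
  0 < eta < 1 -> 0 < u <= 1 / 2 -> 2 * u <= sin eta ->
  pi ^+ 2 + u ^+ 2 < 2 * u * (b * E - de) * r ->
  exists2 v, pi <= v <= pi + eta & phase_gap b de r u E v = 0.
Proof.
move=> b0 de0 r0 E0 /andP[eta0 eta1] /andP[u0 u1] u_sin hr.
have pi2 := @pi_ge2 R.
have gap_pi : phase_gap b de r u E pi < 0.
  rewrite /phase_gap sinpi cospi.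
  have -> : (pi ^+ 2 + u ^+ 2) * pi / r + 2 * u * de * pi
      - b * E * ((pi ^+ 2 - u ^+ 2) * 0 - 2 * u * pi * -1)
    = pi / r * (pi ^+ 2 + u ^+ 2 - 2 * u * (b * E - de) * r) by field; lra.
  by rewrite pmulr_rlt0 ?divr_gt0 //; lra.
have gap_pieta : 0 < phase_gap b de r u E (pi + eta).
  rewrite /phase_gap (addrC pi) sinDpi cosDpi (addrC eta); set v := pi + eta.
  have v2 : 2 <= v by rewrite /v; lra.
  have sin_eta : 0 < sin eta by apply: sin_gt0_pihalf; have := @pihalf_ge1 R; lra.
  have v0 : 0 < v by lra.
  have := divr_ge0 (mulr_ge0 (addr_ge0 (sqr_ge0 v) (sqr_ge0 u)) (ltW v0)) (ltW r0).
  have := mulr_ge0 (mulr_ge0 (ltW u0) de0) (ltW v0).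
  have cos_term : 2 * u * v * cos eta <= v * sin eta.
    by rewrite -mulrA mulrCA ler_pM2l; [have := cos_le1 eta; nra | lra].
  have sin_term : 0 < (v ^+ 2 - v - u ^+ 2) * sin eta by rewrite mulr_gt0 //; nra.
  have : 0 < (v ^+ 2 - u ^+ 2) * sin eta - 2 * u * v * cos eta by lra.
  move/(mulr_gt0 (mulr_gt0 b0 E0)); lra.
have [v /andP[v1 v2] gap_v] :
    exists2 v, v \in `[pi, pi + eta] & phase_gap b de r u E v = 0.
  apply: IVT; first lra; first exact/continuous_subspaceT/continuous_phase_gap.
  by rewrite ge_min le_max (ltW gap_pi) (ltW gap_pieta) orbT.
by exists v; first apply/andP.
Qed.

Lemma exists_chi_root_of_phase be de r u v : be < 0 -> 0 < r -> 0 < u -> 0 < v ->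
  sin v <= 0 -> phase_gap (- be) de r u (expR (- u)) v = 0 ->
  exists2 a, 0 < a &
    chi_re a be de r (u / r) (v / r) = 0 /\ chi_im a be de r (u / r) (v / r) = 0.
Proof.
move=> be0 r0 u0 v0 sv gap_v; set E := expR (- u) in gap_v.
have E0 : 0 < E := expR_gt0 _.
have xr : u / r * r = u by rewrite divfK ?gt_eqF.
have yr : v / r * r = v by rewrite divfK ?gt_eqF.
exists (r ^+ 2 * ((v / r + be * E * sin v) / (2 * u * v))).
  rewrite mulr_gt0 ?exprn_gt0 // divr_gt0 ?mulr_gt0 //.
  have : 0 <= be * E * sin v by rewrite -mulrA nmulr_rge0 // pmulr_rle0.
  by have := divr_gt0 v0 r0; lra.
split; last by rewrite /chi_im xr yr -/E; field; rewrite !gt_eqF.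
apply: (@mulIf _ (- (2 * u * v))); first by rewrite oppr_eq0 !mulf_neq0 ?gt_eqF.
by rewrite mul0r -gap_v /chi_re xr yr -/E /phase_gap; field; rewrite !gt_eqF.
Qed.

Lemma root_sqr_ge a be de r x y u eta : 0 < r -> 0 < x -> 0 < y -> be < 0 ->
  x <= u -> x * r <= u -> u <= 1 -> 0 <= cos eta ->
  sin (y * r) <= 0 -> cos eta <= - cos (y * r) ->
  chi_re a be de r x y = 0 -> chi_im a be de r x y = 0 ->
  - be * (1 - u) * cos eta - de - u / 2 <= a * y ^+ 2.
Proof.
move=> r0 x0 y0 be0 xu xru u1 cos_eta sv cv hre him.
have := chi_root_cubic hre him; set E := expR _ => cubic.
have Eu : 1 - u <= E by have := expR_ge1Dx (- (x * r)); rewrite -/E; lra.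
have nbe : 0 <= - be by lra.
have E0 : 0 <= E := ltW (expR_gt0 _).
have ns : 0 <= - sin (y * r) by rewrite oppr_ge0.
have sin_term := mulr_ge0 (mulr_ge0 nbe E0) (mulr_ge0 (ltW x0) ns).
have feedback : y * (- be * (1 - u) * cos eta) <= y * (- be * E * - cos (y * r)).
  by rewrite ler_pM2l // -!mulrA ler_pM2l ?oppr_gt0 // ler_pM //; lra.
have xy : x * y <= u * y by rewrite ler_pM2r.
rewrite -(ler_pM2l (_ : 0 < 2 * y)); last lra.
by rewrite exprS expr2 in cubic; rewrite expr2; lra.
Qed.

Lemma exists_root_long_delay be de r u eta : be < - de -> 0 < de -> 0 < eta < 1 ->
  0 < u <= 1 / 2 -> 2 * u <= sin eta -> 1 <= r ->
  pi ^+ 2 + 1 < 2 * u * (- be * (1 - u) - de) * r ->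
  exists a x y, [/\ 0 < x, 0 < y, chi_re a be de r x y = 0,
    chi_im a be de r x y = 0 &
    (- be * (1 - u) * cos eta - de - u / 2) / (pi + eta) ^+ 2 * r ^+ 2 <= a].
Proof.
move=> hbe de0 eta01 u01 u_sin r1 hr; have r0 : 0 < r by lra.
have /andP[eta0 eta1] := eta01; have /andP[u0 u1] := u01.
have pi2 := @pi_ge2 R; have pih := @pihalf_ge1 R.
have [v v12 gap_v] : exists2 v, pi <= v <= pi + eta &
    phase_gap (- be) de r u (expR (- u)) v = 0.
  apply: exists_phase => //; [lra | exact: ltW | exact: expR_gt0 |].
  have Eu : 1 - u <= expR (- u) by have := expR_ge1Dx (- u); lra.
  have : 2 * u * (- be * (1 - u) - de) * r <= 2 * u * (- be * expR (- u) - de) * r.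
    by rewrite ler_pM2r // ler_pM2l ?mulr_gt0 // lerD2r ler_pM2l //; lra.
  have : u ^+ 2 <= 1 by rewrite expr2; nra.
  lra.
have eta_pi : 0 <= eta <= pi by rewrite ltW //=; lra.
have sv : sin v <= 0 by apply: (sin_le0_piD _ v12); lra.
have cv := cos_le_cosN_piD eta_pi v12.
have /andP[v1 v2] := v12; have v0 : 0 < v by lra.
have be0 : be < 0 by lra.
have [a a0 [hre him]] := exists_chi_root_of_phase be0 r0 u0 v0 sv gap_v.
have x0 : 0 < u / r := divr_gt0 u0 r0; have y0 : 0 < v / r := divr_gt0 v0 r0.
exists a, (u / r), (v / r); split => //.
have yr : v / r * r = v by rewrite divfK ?gt_eqF.
have xu : u / r <= u by rewrite ler_pdivrMr // ler_peMr // ltW.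
have xr : u / r * r <= u by rewrite divfK ?gt_eqF.
have u_le1 : u <= 1 by lra.
have cos_eta : 0 <= cos eta by rewrite cos_ge0_pihalf //; apply/andP; split; lra.
rewrite -yr in sv cv.
have ay2 := root_sqr_ge r0 x0 y0 be0 xu xr u_le1 cos_eta sv cv hre him.
have av2 : a * v ^+ 2 = a * (v / r) ^+ 2 * r ^+ 2 by field; rewrite gt_eqF.
have h1 : (- be * (1 - u) * cos eta - de - u / 2) * r ^+ 2 <= a * v ^+ 2.
  by rewrite av2 ler_pM2r ?exprn_gt0.
have h2 : a * v ^+ 2 <= a * (pi + eta) ^+ 2.
  by rewrite ler_pM2l // !expr2 ler_pM //; lra.
by rewrite mulrAC ler_pdivrMr ?exprn_gt0 //; lra.
Qed.

Lemma exists_phase_params be de k : be < - de -> 0 < de -> 0 < k ->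
  k * pi ^+ 2 < - be - de ->
  exists eta u, [/\ 0 < eta < 1, 0 < u <= 1 / 2, 2 * u <= sin eta &
    k * (pi + eta) ^+ 2 < - be * (1 - u) * cos eta - de - u / 2].
Proof.
move=> hbe de0 k0 hk; have nbe : 0 < - be by lra.
have pi4 : pi < 4 :> R by have := @pihalf_lt2 R; lra.
set g := - be - de - k * pi ^+ 2; have g0 : 0 < g by rewrite /g; lra.
(* [g] is the slack in [hk]; [eta] and [u] are taken so small that each of them
   costs at most [g / 4]. *)
have [eta [eta0 eta_half cos_eta eta_g]] : exists eta, [/\ 0 < eta, eta <= 1 / 2,
    1 - g / (4 * - be) < cos eta & eta <= g / (36 * k)].
  apply: (filter_ex (F := (0 : R)^'+)); near=> eta; split.
  - by near: eta; exact: nbhs_right_gt.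
  - by near: eta; apply: nbhs_right_le.
  - near: eta; apply: (cvgr_gt _ (cvg_at_right_filter (@continuous_cos R 0))).
    by rewrite cos0 ltrBlDr ltrDl divr_gt0 // mulr_gt0.
  - by near: eta; apply: nbhs_right_le; rewrite divr_gt0 // mulr_gt0.
have sin_eta : 0 < sin eta by apply: sin_gt0_pihalf; have := @pihalf_ge1 R; lra.
have [u [u0 u_half u_sin u_g]] : exists u, [/\ 0 < u, u <= 1 / 2,
    u <= sin eta / 2 & u <= g / (4 * (- be + 1))].
  apply: (filter_ex (F := (0 : R)^'+)); near=> u; split.
  - by near: u; exact: nbhs_right_gt.
  - by near: u; apply: nbhs_right_le.
  - by near: u; apply: nbhs_right_le; rewrite divr_gt0.
  - by near: u; apply: nbhs_right_le; rewrite divr_gt0 // mulr_gt0 //; lra.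
exists eta, u; split; [by rewrite eta0; lra | by rewrite u0 | lra |].
have : - be * (1 - u) * (1 - g / (4 * - be)) <= - be * (1 - u) * cos eta.
  by rewrite ler_pM2l ?mulr_gt0 //; lra.
have -> : - be * (1 - u) * (1 - g / (4 * - be)) = - be * (1 - u) - (1 - u) * g / 4.
  by field; rewrite lt_eqF //; lra.
have b1 : 0 < 4 * (- be + 1) by lra.
have : u * (4 * (- be + 1)) <= g by rewrite -ler_pdivlMr.
have k36 : 0 < 36 * k by rewrite mulr_gt0.
have : eta * (36 * k) <= g by rewrite -ler_pdivlMr.
have : k * eta * (2 * pi + eta) <= k * eta * 9.
  by rewrite ler_pM2l ?(mulr_gt0 k0 eta0) //; lra.
have gE : g = - be - de - k * pi ^+ 2 by [].
by have := mulr_gt0 u0 g0; lra.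
Unshelve. all: by end_near.
Qed.

End RootExistence.

Section CriticalSpeed.
Context {R : realType}.
Implicit Types A be de eps r c : R.

Lemma cstar_ge A be de r (cb : \bar R) :
  (forall c, 0 < c -> (c%:E < cb)%E -> root_free (A / c ^+ 2) be de r) ->
  (cb <= cstar A be de r)%E.
Proof.
by move=> rf; apply: ereal_sup_ubound => c c0 /(rf c c0) /good_speed_root_free.
Qed.

Lemma cstar_le_root A be de r c x y : 0 < c -> 0 < x -> 0 < y ->
  chi_re (A / c ^+ 2) be de r x y = 0 -> chi_im (A / c ^+ 2) be de r x y = 0 ->
  (cstar A be de r <= c%:E)%E.
Proof.
move=> c0 x0 y0 hre him; apply: ge_ereal_sup => cb /= good.
rewrite leNgt; apply/negP => /(good c c0).
exact: root_not_good_speed x0 y0 hre him.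
Qed.

Lemma cstar_le_root_coef A be de r q a x y : 0 < A -> 0 < q -> 0 < r ->
  0 < x -> 0 < y -> A / q ^+ 2 * r ^+ 2 <= a ->
  chi_re a be de r x y = 0 -> chi_im a be de r x y = 0 ->
  (cstar A be de r <= (q / r)%:E)%E.
Proof.
move=> A0 q0 r0 x0 y0 ha hre him.
have a0 : 0 < a by apply: lt_le_trans ha; rewrite !mulr_gt0 ?invr_gt0 ?exprn_gt0.
set c := Num.sqrt (A / a); have c0 : 0 < c by rewrite sqrtr_gt0 divr_gt0.
have Ac : A / c ^+ 2 = a by rewrite sqr_sqrtr ?divr_ge0 ?ltW //; field; rewrite !gt_eqF.
rewrite -Ac in hre him; apply: le_trans (cstar_le_root c0 x0 y0 hre him) _.
have qr : 0 < q / r by rewrite divr_gt0.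
rewrite lee_fin -[q / r]gtr0_norm // -sqrtr_sqr ler_sqrt ?sqr_ge0 //.
rewrite ler_pdivrMr // (_ : A = (q / r) ^+ 2 * (A / q ^+ 2 * r ^+ 2)).
  by rewrite ler_pM2l ?exprn_gt0.
by field; rewrite !gt_eqF.
Qed.

Lemma ckappa_le_cstar A be de r : 0 < A -> 0 < r -> be < 0 -> 0 < de ->
  (ckappa A be de r <= cstar A be de r)%E.
Proof.
move=> A0 r0 be0 de0; apply: ge_ereal_sup => _ [c [c0 roots] <-].
case: roots => l1 [l2 [l3 [[_ l2_lt0 _] [[_ chi_l2 _] _]]]].
apply: cstar_ge => c' c'0; rewrite lte_fin => c'c.
apply: (root_free_of_chi_neg_ge0 (p := - l2 * c)) => //.
- by rewrite divr_gt0 ?exprn_gt0.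
- by rewrite mulr_gt0 ?oppr_gt0.
have cc' : 1 <= c ^+ 2 / c' ^+ 2.
  by rewrite ler_pdivlMr ?exprn_gt0 // mul1r !expr2 ler_pM // ltW.
have -> : A / c' ^+ 2 * (- l2 * c) ^+ 2 + - l2 * c - de + be * expR (- l2 * c * r)
  = chi_kappa A be de r c l2 + A * l2 ^+ 2 * (c ^+ 2 / c' ^+ 2 - 1).
  by rewrite /chi_kappa !mulNr; field; rewrite gt_eqF.
rewrite chi_l2 add0r; apply: mulr_ge0; last by rewrite subr_ge0.
by rewrite mulr_ge0 ?sqr_ge0 // ltW.
Qed.

Lemma cstar_eq_pinfty A be de r : 0 < A -> 0 < r -> be < 0 -> - de <= be ->
  cstar A be de r = +oo%E.
Proof.
move=> A0 r0 be0 hbe; apply/eqP; rewrite -leye_eq; apply: cstar_ge => c c0 _.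
by apply: root_free_of_le_feedback; rewrite ?divr_gt0 ?exprn_gt0.
Qed.

Lemma cstar_ge_long_delay A be de eps : 0 < A -> be < - de -> 0 < de -> 0 < eps ->
  \forall r \near +oo, (((mustar A be de - eps) / r)%:E <= cstar A be de r)%E.
Proof.
move=> A0 hbe de0 eps0; have bd : 0 < - be - de by lra.
have pi2 := @pi_ge2 R.
set S := Num.sqrt (A / (- be - de)); have S0 : 0 < S by rewrite sqrtr_gt0 divr_gt0.
have S2 : S ^+ 2 = A / (- be - de) by rewrite sqr_sqrtr // ltW // divr_gt0.
set eta := eps / (S + 2 * eps).
have eta0 : 0 < eta by rewrite divr_gt0 //; lra.
have eta_half : eta < 1 / 2 by rewrite ltr_pdivrMr; lra.
have etaS : eta * S <= eps by rewrite mulrAC ler_pdivrMr; nra.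
set k := (- be - de) / (pi - eta) ^+ 2.
have k0 : 0 < k by rewrite divr_gt0 // exprn_gt0; lra.
have sin_eta : 0 < sin eta by apply: sin_gt0_pihalf; have := @pihalf_ge1 R; lra.
near=> r.
have r1 : 1 / (2 * k) <= r by near: r; apply: nbhs_pinfty_ge; rewrite num_real.
have r2 : pi * expR 1 / (- be * sin eta) <= r.
  by near: r; apply: nbhs_pinfty_ge; rewrite num_real.
have r0 : 0 < r by apply: lt_le_trans r1; rewrite divr_gt0 // mulr_gt0.
apply: (@le_trans _ _ (((pi - eta) * S / r)%:E)).
  by rewrite lee_fin ler_pM2r ?invr_gt0 // /mustar -/S; lra.
apply: cstar_ge => c c0; rewrite lte_fin => hc.
have kc : k * r ^+ 2 <= A / c ^+ 2.
  rewrite ler_pdivlMr ?exprn_gt0 // -mulrA -exprMn.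
  have -> : A = k * ((pi - eta) * S) ^+ 2.
    by rewrite exprMn S2 /k; field; rewrite !gt_eqF //; lra.
  have rc : r * c <= (pi - eta) * S by apply/ltW; rewrite mulrC -ltr_pdivlMr.
  by rewrite ler_pM2l // !expr2; apply: (ler_pM _ _ rc rc); exact/ltW/mulr_gt0.
apply: (root_free_long_delay (eta := eta)) => //; first by rewrite eta0; lra.
- have k2 : 0 < 2 * k by lra.
  have : r * 1 <= r * (r * (2 * k)) by rewrite ler_pM2l // -ler_pdivrMr.
  by rewrite expr2 in kc; lra.
- have bs : 0 < - be * sin eta by rewrite mulr_gt0 //; lra.
  by rewrite ler_pdivrMr // in r2; lra.
Unshelve. all: by end_near.
Qed.

Lemma cstar_le_long_delay A be de eps : 0 < A -> be < - de -> 0 < de -> 0 < eps ->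
  \forall r \near +oo, (cstar A be de r <= ((mustar A be de + eps) / r)%:E)%E.
Proof.
move=> A0 hbe de0 eps0; have bd : 0 < - be - de by lra.
set S := Num.sqrt (A / (- be - de)); have S0 : 0 < S by rewrite sqrtr_gt0 divr_gt0.
have AS : A = (- be - de) * S ^+ 2.
  by rewrite sqr_sqrtr ?divr_ge0 ?ltW // mulrC divfK ?gt_eqF.
set q := pi * S + eps; have Sq : S * pi < q by rewrite /q; lra.
have q0 : 0 < q by apply: le_lt_trans Sq; rewrite mulr_ge0 ?ltW // pi_gt0.
set k := A / q ^+ 2; have k0 : 0 < k by rewrite divr_gt0 // exprn_gt0.
have hk : k * pi ^+ 2 < - be - de.
  rewrite /k mulrAC ltr_pdivrMr ?exprn_gt0 // AS -mulrA -exprMn ltr_pM2l //.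
  by rewrite !expr2 ltr_pM // mulr_ge0 ?ltW // pi_gt0.
have [eta [u [eta01 u01 u_sin hN]]] := exists_phase_params hbe de0 k0 hk.
have /andP[u0 u1] := u01; set N := - be * (1 - u) * cos eta - de - u / 2 in hN.
have N0 : 0 < N by apply: le_lt_trans hN; rewrite mulr_ge0 ?sqr_ge0 // ltW.
have bu : 0 < 2 * u * (- be * (1 - u) - de).
  have cos_u : - be * (1 - u) * cos eta <= - be * (1 - u).
    by apply: ler_piMr; [apply: mulr_ge0; lra | exact: cos_le1].
  by rewrite /N in N0; rewrite !mulr_gt0 //; lra.
near=> r.
have r1 : 1 <= r by near: r; apply: nbhs_pinfty_ge.
have r2 : (pi ^+ 2 + 1) / (2 * u * (- be * (1 - u) - de)) < r.
  by near: r; apply: nbhs_pinfty_gt; rewrite num_real.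
have r0 : 0 < r by lra.
have hr : pi ^+ 2 + 1 < 2 * u * (- be * (1 - u) - de) * r.
  by rewrite mulrC -ltr_pdivrMr.
have [a [x [y [x0 y0 hre him ha]]]] :=
  exists_root_long_delay hbe de0 eta01 u01 u_sin r1 hr.
have k_a : k * r ^+ 2 <= a.
  apply: le_trans ha; rewrite ler_pM2r ?exprn_gt0 // ler_pdivlMr ?ltW //.
  by rewrite exprn_gt0 //; have := @pi_gt0 R; lra.
by rewrite /mustar -/S -/q; exact: (cstar_le_root_coef A0 q0 r0 x0 y0 k_a hre him).
Unshelve. all: by end_near.
Qed.

Lemma cstar_asymptotics A be de : 0 < A -> be < - de -> 0 < de ->
  (\forall r \near +oo, cstar A be de r \is a fin_num) /\
  (fun r => r * fine (cstar A be de r)) @ +oo --> mustar A be de.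
Proof.
move=> A0 hbe de0; split.
  move: (cstar_ge_long_delay A0 hbe de0 ltr01) (cstar_le_long_delay A0 hbe de0 ltr01).
  apply: filterS2 => r lo up.
  by rewrite fin_numElt (lt_le_trans (ltNyr _) lo) (le_lt_trans up (ltry _)).
apply/cvgrPdist_le => eps eps0.
move: (nbhs_pinfty_gt (num_real (0 : R))) (cstar_ge_long_delay A0 hbe de0 eps0)
  (cstar_le_long_delay A0 hbe de0 eps0).
apply: filterS3 => r r0; case: (cstar A be de r) => // c; rewrite !lee_fin /= => lo up.
rewrite ler_pdivrMr // in lo; rewrite ler_pdivlMr // in up.
by rewrite ler_norml; apply/andP; split; lra.
Qed.

End CriticalSpeed.

Theorem lemma6p4 (R : realType) (m D kappa sM : R)
    (d d1 d2 b b1 : R -> R) :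
  1 < m -> 0 < D ->
  (* d in C^2([0,+oo)) with d' = d1, d'' = d2 *)
  {within `[0, +oo[, continuous d} ->
  {within `[0, +oo[, continuous d1} ->
  {within `[0, +oo[, continuous d2} ->
  (forall s : R, 0 < s -> is_derive s 1 d (d1 s)) ->
  (forall s : R, 0 < s -> is_derive s 1 d1 (d2 s)) ->
  d 0 = 0 ->
  (forall s : R, 0 < s -> 0 < d1 s) ->
  (forall s : R, 0 < s -> 0 <= d2 s) ->
  (* b in C^1([0,+oo); [0,+oo)) with b' = b1 *)
  {within `[0, +oo[, continuous b} ->
  {within `[0, +oo[, continuous b1} ->
  (forall s : R, 0 < s -> is_derive s 1 b (b1 s)) ->
  (forall s : R, 0 <= s -> 0 <= b s) ->
  (* sM is the only positive local extremum point of b, and its global max *)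
  0 < sM -> local_extremum b sM ->
  (forall s : R, 0 < s -> local_extremum b s -> s = sM) ->
  (forall s : R, 0 <= s -> b s <= b sM) ->
  b 0 = 0 ->
  0 < kappa -> b kappa = d kappa ->
  b1 0 > d1 0 -> b1 kappa < d1 kappa ->
  (forall s : R, 0 < s < kappa -> d s < b s /\ b s <= b1 0 * s) ->
  sM < kappa ->
  b1 kappa < 0 ->
  let A := D * m * kappa `^ (m - 1) in
  (forall r : R, 0 < r -> (ckappa A (b1 kappa) (d1 kappa) r <= cstar A (b1 kappa) (d1 kappa) r)%E) /\
  (- d1 kappa <= b1 kappa ->
     exists r0 : R, forall r : R, r0 <= r -> cstar A (b1 kappa) (d1 kappa) r = +oo%E) /\
  (b1 kappa < - d1 kappa ->
     (\forall r \near +oo, cstar A (b1 kappa) (d1 kappa) r \is a fin_num) /\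
     (fun r => r * fine (cstar A (b1 kappa) (d1 kappa) r)) @ +oo
       --> mustar A (b1 kappa) (d1 kappa)).
Proof.
move=> m1 D0 _ _ _ _ _ _ d1_gt0 _ _ _ _ _ _ _ _ _ _ kappa0 _ _ _ _ _ b1_lt0 A.
have A0 : 0 < A by rewrite !mulr_gt0 ?powR_gt0 //; lra.
have de0 : 0 < d1 kappa := d1_gt0 _ kappa0.
split; first by move=> r r0; exact: ckappa_le_cstar.
split; first by move=> hbe; exists 1 => r r1; apply: cstar_eq_pinfty => //; lra.
by move=> hbe; exact: cstar_asymptotics.
Qed.
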